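(* For a finite group $G$, $G=\tilde{\mathrm{F}}(G)$ if and only if the intersection of all maximal normal subgroups of $G$ coincides with $\Phi(G)$.
   Context: $\tilde{\mathrm{F}}(G)$ is defined by $\Phi(G)\subseteq\tilde{\mathrm{F}}(G)$ and $\tilde{\mathrm{F}}(G)/\Phi(G)=\mathrm{Soc}(G/\Phi(G))$, where $\Phi$ is the Frattini subgroup and $\mathrm{Soc}$ the socle. Maximal normal subgroups are proper. *)

From mathcomp Require Import all_boot all_fingroup all_solvable.
Set Implicit Arguments. Unset Strict Implicit. Unset Printing Implicit Defensive.
Local Open Scope group_scope.

Definition socle (gT : finGroupType) (G : {set gT}) : {set gT} :=
  <<\bigcup_(M : {group gT} | minnormal M G && (M \subset G)) M>>.

(* Generalized Fitting-type subgroup F~(G): the full preimage in G of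
   Soc(G / Phi(G)) under the quotient map, so Phi(G) <= F~(G) and
   F~(G)/Phi(G) = Soc(G/Phi(G)). *)
Definition Ftilde (gT : finGroupType) (G : {group gT}) : {set gT} :=
  coset 'Phi(G) @*^-1 socle (G / 'Phi(G)).

(* Intersection of all maximal normal subgroups (proper) of G, taken inside G
   (so it equals G when there are none, i.e. G = 1). *)
Definition maxnormal_core (gT : finGroupType) (G : {group gT}) : {set gT} :=
  G :&: \bigcap_(M : {group gT} | maxnormal M G G) M.

From mathcomp Require Import all_boot all_fingroup all_solvable.
Set Implicit Arguments. Unset Strict Implicit. Unset Printing Implicit Defensive.
Local Open Scope group_scope.

(* Phi(G) lies in every maximal normal subgroup, so modulo Phi(G) both sides
   become statements about H = G/Phi(G): it suffices to show that Soc(H) = H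
   iff the maximal normal subgroups of H intersect trivially.  If Soc(H) = H,
   every normal subgroup of H has a normal complement; the complement of the
   intersection R of all maximal normal subgroups lies in one of them unless
   R = 1, and that one also contains R.  Conversely, take an irredundant family
   F of maximal normal subgroups with trivial intersection: for M in F the
   intersection of F \ {M} is a minimal normal subgroup complementing M, and
   peeling the members of F off one at a time yields H = Soc(H). *)

Section MaxNormal.
Variable gT : finGroupType.
Implicit Types G H L M N : {group gT}.

Lemma maxnormal_coreP H x :
  reflect (x \in H /\ forall M, maxnormal M H H -> x \in M)
          (x \in maxnormal_core H).
Proof.
rewrite inE; apply: (iffP andP) => -[Hx Mx]; split=> //.
  exact/bigcapP.
by apply/bigcapP.
Qed.

Lemma maxnormal_exists H L : L <| H -> L \proper H ->
  {M : {group gT} | maxnormal M H H & L \subset M}.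
Proof.
case/andP=> _ nLH ltLH.
pose gP := fun M : {group gT} => (M \proper H) && (H \subset 'N(M)).
have [M maxM sLM] := @maxgroup_exists _ gP L (introT andP (conj ltLH nLH)).
by exists M.
Qed.

Lemma maxnormal_mul H M L :
  maxnormal M H H -> L <| H -> ~~ (L \subset M) -> L * M = H.
Proof.
move=> maxM /andP[sLH nLH] not_sLM.
have [sMH nMH] := andP (maxnormal_normal maxM).
have nML := subset_trans sMH nLH.
apply: contraNeq not_sLM => neLM_H; rewrite -norm_joinEr // in neLM_H.
have [_ /(_ (L <*> M)%G) max_eq] := maxgroupP maxM.
rewrite -max_eq ?joing_subl ?joing_subr //= properEneq neLM_H.
by rewrite join_subG sLH sMH normsY.
Qed.

Lemma Phi_sub_maxnormal G M : maxnormal M G G -> 'Phi(G) \subset M.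
Proof.
move=> maxM; apply: contraLR (maxnormal_proper maxM) => not_sPM.
have nPM := subset_trans (maxnormal_sub maxM) (normal_norm (Phi_normal G)).
rewrite -(Phi_nongen (G := G) (X := M)) ?genGid ?properxx //.
by rewrite norm_joinEr // (maxnormal_mul maxM (Phi_normal G) not_sPM).
Qed.

Lemma Phi_sub_maxnormal_core G : 'Phi(G) \subset maxnormal_core G.
Proof. by rewrite subsetI Phi_sub; apply/bigcapsP=> M /Phi_sub_maxnormal. Qed.

Lemma maxnormal_core_sub H M : maxnormal M H H -> maxnormal_core H \subset M.
Proof. by move=> maxM; apply/subsetP=> x /maxnormal_coreP[_]; apply. Qed.

Lemma maxnormal_core_normal H : maxnormal_core H <| H.
Proof.
rewrite /normal subsetIl normsI ?normG // norms_bigcap //.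
by apply/bigcapsP=> M /maxnormal_normal/normal_norm.
Qed.

End MaxNormal.

Section Socle.
Variable gT : finGroupType.
Implicit Types A B C H L M N : {group gT}.

Canonical socle_group H := Eval hnf in [group of socle H].

Lemma socle_sub H : socle H \subset H.
Proof. by rewrite gen_subG; apply/bigcupsP => M /andP[]. Qed.

Lemma minnormal_sub_socle H N : minnormal N H -> N \subset H -> N \subset socle H.
Proof. by move=> minN sNH; rewrite sub_gen // (bigcup_max N) ?minN. Qed.

Lemma minnormal_TI H N L :
  minnormal N H -> H \subset 'N(L) -> ~~ (N \subset L) -> N :&: L = 1.
Proof.
case/mingroupP=> /andP[_ nNH] minN nLH; apply: contraNeq => ntNL.
by rewrite -(minN (N :&: L)%G) ?subsetIr ?subsetIl //= ntNL normsI.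
Qed.

Lemma mulg_TI A B L :
  A :&: L \subset [1] -> B :&: (A * L) \subset [1] -> A * B :&: L \subset [1].
Proof.
move=> tiAL tiB_AL; apply/subsetP=> _ /setIP[/mulsgP[a b Aa Bb ->] abL].
have /set1P b1 : b \in [1].
  by apply: (subsetP tiB_AL); rewrite inE Bb -[b](mulKg a) mem_mulg ?groupV.
have /set1P a1 : a \in [1] by apply: (subsetP tiAL); rewrite inE Aa -[a]mulg1 -b1.
by rewrite a1 b1 mulg1 group1.
Qed.

Lemma socle_proper_minnormal H L : socle H = H -> L \proper H ->
  exists2 N : {group gT}, minnormal N H & (N \subset H) && ~~ (N \subset L).
Proof.
move=> socH ltLH.
have [N /andP[/andP[minN sNH] not_sNL] | noN] :=
  pickP [pred N : {group gT} | minnormal N H && (N \subset H) && ~~ (N \subset L)].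
- by exists N; rewrite ?sNH.
- suff: H \subset L by rewrite properE in ltLH; case/andP: ltLH => _ /negP.
  rewrite -socH gen_subG; apply/bigcupsP=> N /andP[minN sNH].
  by have := noN N; rewrite /= minN sNH /= => /negbFE.
Qed.

Lemma socle_normal_complement H L : socle H = H -> L <| H ->
  exists2 C : {group gT}, C <| H & C :&: L = 1 /\ C * L = H.
Proof.
move=> socH nsLH; have [sLH nLH] := andP nsLH.
(* Take C maximal among normal subgroups meeting L trivially; a minimal normal
   subgroup outside C * L would let C grow. *)
pose normal_TI C := (C <| H) && (C :&: L \subset [1]).
have TI1 : normal_TI 1%G by rewrite /normal_TI normal1 subsetIl.
have [C /maxgroupP[/andP[nsCH tiCL] maxC] _] := @maxgroup_exists _ normal_TI 1%G TI1.
have [sCH nCH] := andP nsCH.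
have defCL : C <*> L = C * L by rewrite norm_joinEr // (subset_trans sLH nCH).
exists C => //; split; first exact/trivgP.
apply/eqP; rewrite eqEproper mul_subG //= -defCL; apply/negP => ltCLH.
have [N minN /andP[sNH not_sN_CL]] := socle_proper_minnormal socH ltCLH.
have nsNH : N <| H by case/mingroupP: minN => /andP[_ nNH] _; apply/andP.
have tiN_CL := minnormal_TI minN (normal_norm (normalY nsCH nsLH)) not_sN_CL.
have TI_CN : normal_TI (C <*> N)%G.
  rewrite /normal_TI normalY //= norm_joinEr ?(subset_trans sNH nCH) //.
  by rewrite mulg_TI // -defCL tiN_CL.
have defCN := maxC _ TI_CN (joing_subl C N).
by case/negP: not_sN_CL; rewrite (subset_trans (joing_subr C N)) //= defCN joing_subl.
Qed.

Lemma maxnormal_core_trivial H : socle H = H -> maxnormal_core H = 1.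
Proof.
move=> socH; have nsRH := maxnormal_core_normal H.
have [C nsCH [tiCR defCR]] := socle_normal_complement socH nsRH.
have: ~~ (C \proper H).
  apply/negP=> ltCH; have [M maxM sCM] := maxnormal_exists nsCH ltCH.
  have: C * maxnormal_core H \subset M by rewrite mul_subG ?maxnormal_core_sub.
  by rewrite defCR; apply/negP; case/andP: (maxnormal_proper maxM).
rewrite properEneq normal_sub // andbT negbK => /eqP eqCH.
by rewrite -tiCR eqCH (setIidPr (normal_sub nsRH)).
Qed.

End Socle.

Section CapOf.
Variable gT : finGroupType.
Implicit Types H M : {group gT}.
Implicit Types F S : {set {group gT}}.

Definition cap_of H S : {set gT} := H :&: \bigcap_(M in S) gval M.

Lemma cap_of_sub H S : cap_of H S \subset H.
Proof. exact: subsetIl. Qed.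

Lemma cap_of0 H : cap_of H set0 = H.
Proof. by rewrite /cap_of big_set0 setIT. Qed.

Lemma cap_ofU1 H M S : cap_of H (M |: S) = cap_of H S :&: M.
Proof. by rewrite /cap_of bigcap_setU big_set1 setIAC setIA. Qed.

Lemma cap_ofS H S1 S2 : S1 \subset S2 -> cap_of H S2 \subset cap_of H S1.
Proof.
move=> sS12; rewrite setIS //; apply/bigcapsP=> M S1M.
by rewrite (bigcap_inf M) ?(subsetP sS12).
Qed.

Lemma cap_of_normal H S : {in S, forall M, H \subset 'N(M)} -> cap_of H S <| H.
Proof.
move=> nSH; rewrite /normal cap_of_sub normsI ?normG // norms_bigcap //.
exact/bigcapsP.
Qed.

Lemma maxnormal_coreE H :
  maxnormal_core H = cap_of H [set M : {group gT} | maxnormal M H H].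
Proof. by rewrite /cap_of; congr (_ :&: _); apply: eq_bigl => M; rewrite inE. Qed.

Section Irredundant.
Variables (H : {group gT}) (F : {set {group gT}}).
Hypothesis maxF : {in F, forall M, maxnormal M H H}.
Hypothesis tiF : cap_of H F = 1.
Hypothesis irrF : {in F, forall M, cap_of H (F :\ M) != 1}.

Lemma cap_ofD1_TI M : M \in F -> cap_of H (F :\ M) :&: M = 1.
Proof. by move=> FM; rewrite -cap_ofU1 setD1K. Qed.

Lemma cap_ofD1_normal M : cap_of H (F :\ M) <| H.
Proof.
by apply: cap_of_normal => M' /setD1P[_ /maxF/maxnormal_normal/normal_norm].
Qed.

Lemma cap_ofD1_mul M : M \in F -> cap_of H (F :\ M) * M = H.
Proof.
move=> FM; apply: maxnormal_mul (maxF FM) (cap_ofD1_normal M) _.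
apply: contra (irrF FM) => sKM.
by rewrite -(cap_ofD1_TI FM) (setIidPl sKM).
Qed.

Lemma cap_ofD1_minnormal M : M \in F -> minnormal (cap_of H (F :\ M)) H.
Proof.
move=> FM; set K := cap_of H (F :\ M); have nsKH : K <| H := cap_ofD1_normal M.
apply/mingroupP; rewrite irrF ?normal_norm //; split=> // L /andP[ntL nLH] sLK.
have nsLH : L <| H by rewrite /normal nLH (subset_trans sLK (cap_of_sub _ _)).
have not_sLM : ~~ (L \subset M).
  apply: contra ntL => sLM; rewrite -subG1 -(cap_ofD1_TI FM).
  by rewrite subsetI sLK.
have defH := maxnormal_mul (maxF FM) nsLH not_sLM.
have: L * (M :&: K) = K by rewrite group_modl // defH (setIidPr (normal_sub nsKH)).
by rewrite setIC cap_ofD1_TI // mulg1.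
Qed.

Lemma socle_mul_cap_of S : S \subset F -> socle H * cap_of H S = H.
Proof.
elim: {S}_.+1 {-2}S (ltnSn #|S|) => // n IHn S leSn sSF.
have [-> | [M SM]] := set_0Vmem S; first by rewrite cap_of0 mulSGid ?socle_sub.
have FM := subsetP sSF M SM; set K := cap_of H (F :\ M).
have sKsoc : K \subset socle H.
  by rewrite minnormal_sub_socle ?cap_ofD1_minnormal ?cap_of_sub.
have defS : K * (M :&: cap_of H (S :\ M)) = cap_of H (S :\ M).
  rewrite group_modl ?cap_ofS ?setSD // cap_ofD1_mul //.
  exact/setIidPr/cap_of_sub.
rewrite -(setD1K SM) cap_ofU1 setIC -(mulGSid sKsoc) -mulgA defS.
apply: IHn; last exact: subset_trans (subD1set S M) sSF.
exact: leq_trans (proper_card (properD1 SM)) leSn.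
Qed.

Lemma irredundant_socle_full : socle H = H.
Proof. by rewrite -[RHS](socle_mul_cap_of (subxx F)) tiF mulg1. Qed.

End Irredundant.

Lemma socle_full H : maxnormal_core H = 1 -> socle H = H.
Proof.
move=> core1; pose maxH := [set M : {group gT} | maxnormal M H H].
pose P S := (S \subset maxH) && (cap_of H S == 1).
have /ex_minset[F /minsetP[/andP[sFmax /eqP tiF] minF]] : exists S, P S.
  by exists maxH; rewrite /P subxx -maxnormal_coreE core1 eqxx.
apply: (irredundant_socle_full (F := F)) => // M FM.
  by have := subsetP sFmax M FM; rewrite inE.
apply: contraTneq FM => tiFM.
have PFM : P (F :\ M) by rewrite /P tiFM eqxx (subset_trans (subD1set F M)).
by rewrite -(minF _ PFM (subD1set F M)) setD11.
Qed.

Lemma socle_eq_maxnormal_core1 H : (socle H == H) = (maxnormal_core H == 1).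
Proof.
by apply/eqP/eqP => [/maxnormal_core_trivial | /socle_full].
Qed.

End CapOf.

Section Quotient.
Variables (gT : finGroupType) (G P : {group gT}).
Hypothesis nsPG : P <| G.
Implicit Types M : {group gT}.

Lemma cosetpre_eq (A B : {set coset_of P}) :
  (coset P @*^-1 A == coset P @*^-1 B) = (A == B).
Proof. by rewrite !eqEsubset !cosetpreSK. Qed.

Lemma maxnormal_quotient M : P \subset M -> M <| G ->
  maxnormal (M / P) (G / P) (G / P) = maxnormal M G G.
Proof.
move=> sPM nsMG; rewrite -!quotient_simple ?quotient_normal //.
exact/isog_simple/third_isog.
Qed.

Hypothesis sP_core : P \subset maxnormal_core G.

Lemma cosetpre_maxnormal_core :
  coset P @*^-1 maxnormal_core (G / P) = maxnormal_core G.
Proof.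
have sPmax M : maxnormal M G G -> P \subset M.
  by move=> maxM; apply: subset_trans sP_core (maxnormal_core_sub maxM).
apply/setP=> x; apply/morphpreP/maxnormal_coreP.
  case=> Nx /maxnormal_coreP[Gx_bar x_bar_max]; split.
    by rewrite -(quotientGK nsPG); apply/morphpreP.
  move=> M maxM; have sPM := sPmax M maxM.
  have nsPM : P <| M := normalS sPM (maxnormal_sub maxM) nsPG.
  rewrite -(quotientGK nsPM); apply/morphpreP; split=> //; apply: x_bar_max.
  by rewrite maxnormal_quotient ?maxnormal_normal.
case=> Gx x_max; have Nx := subsetP (normal_norm nsPG) x Gx.
split=> //; apply/maxnormal_coreP; split=> [|Mb maxMb]; first exact: mem_quotient.
have [M defMb sPM nsMG] := inv_quotientN nsPG (maxnormal_normal maxMb).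
rewrite defMb maxnormal_quotient // in maxMb *.
by rewrite mem_quotient ?x_max.
Qed.

End Quotient.

Theorem theorem4 (gT : finGroupType) (G : {group gT}) :
  (G :==: Ftilde G) = (maxnormal_core G :==: 'Phi(G)).
Proof.
have nsPG := Phi_normal G.
rewrite /Ftilde -{1}(quotientGK nsPG) cosetpre_eq eq_sym socle_eq_maxnormal_core1.
by rewrite -cosetpre_eq cosetpre1 cosetpre_maxnormal_core ?Phi_sub_maxnormal_core.
Qed.
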